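(* Let $\mathcal{F}$ be a feature. For every weighted graph $(G,f)$, the functions $\sigma^{\mathcal{F}}_{(G,f)}$ and $\varrho^{\mathcal{F}}_{(G,f)}$ are categorical persistence functions; that is, $\sigma^{\mathcal{F}}$ and $\varrho^{\mathcal{F}}$ are ip-function generators.
   Context: Graphs are finite simple undirected graphs $G=(V,E)$; a weighted graph is $(G,f)$ with $f:E\to\mathbb{R}$. For $u\in\mathbb{R}$, $G_u=(V_u,E_u)$ is the subgraph of $G$ induced by the edge set $f^{-1}((-\infty,u])$ (vertices: endpoints of these edges), and $G_{+\infty}=G$. $\Delta^+=\{(u,v)\in\mathbb{R}\times(\mathbb{R}\cup\{+\infty\}): u<v\}$. A feature $\mathcal{F}$ assigns to every graph $H=(V_H,E_H)$ (in particular to every subgraph $G_w$) a function $2^{V_H\cup E_H}\to\{true,false\}$; $X$ is an $\mathcal{F}$-set of $H$ if $\mathcal{F}(X)=true$ in $H$. $X\subseteq V\cup E$ is an $\mathcal{F}$-set at level $w$ if it is an $\mathcal{F}$-set of $G_w$. $X$ is a steady $\mathcal{F}$-set at $(u,v)\in\Delta^+$ if it is an $\mathcal{F}$-set at all levels $w$ with $u\le w\le v$; it is a ranging $\mathcal{F}$-set at $(u,v)$ if there exist levels $w\le u$ and $w'\ge v$ at which it is an $\mathcal{F}$-set. Let $S^{\mathcal{F}}_{(G,f)}(u,v)$ and $R^{\mathcal{F}}_{(G,f)}(u,v)$ be the sets of steady, resp. ranging, $\mathcal{F}$-sets at $(u,v)$, and $\sigma^{\mathcal{F}}_{(G,f)}(u,v)=|S^{\mathcal{F}}_{(G,f)}(u,v)|$,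 $\varrho^{\mathcal{F}}_{(G,f)}(u,v)=|R^{\mathcal{F}}_{(G,f)}(u,v)|$. A categorical persistence function is a lower-bounded $p:\Delta^+\to\mathbb{Z}$ such that for all $u_1\le u_2<v_1\le v_2$: (1) $p(u_1,v_1)\le p(u_2,v_1)$ and $p(u_2,v_2)\le p(u_2,v_1)$; (2) $p(u_2,v_1)-p(u_1,v_1)\ge p(u_2,v_2)-p(u_1,v_2)$. *)

From HB Require Import structures.
From mathcomp Require Import all_boot all_order all_algebra.
From mathcomp Require Import boolp reals.
Set Implicit Arguments. Unset Strict Implicit. Unset Printing Implicit Defensive.
Import Order.TTheory GRing.Theory Num.Theory.
Local Open Scope ring_scope.

Section Defs.
Variable R : realType.

(* Extended levels R ∪ {+oo}: [Some r] is r, [None] is +oo. *)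
Definition ext_le (a b : option R) : bool :=
  match a, b with
  | _, None => true
  | None, Some _ => false
  | Some x, Some y => x <= y
  end.

Definition in_Delta (u : R) (v : option R) : bool := ext_le (Some u) v && (Some u != v).

(* Categorical persistence function p : Δ+ -> Z (values outside Δ+ irrelevant). *)
Definition categorical_persistence (p : R -> option R -> int) : Prop :=
  (exists m : int, forall u v, in_Delta u v -> m <= p u v) /\
  (forall (u1 u2 : R) (v1 v2 : option R),
      u1 <= u2 -> in_Delta u2 v1 -> ext_le v1 v2 ->
      [/\ p u1 v1 <= p u2 v1,
          p u2 v2 <= p u2 v1 &
          p u2 v2 - p u1 v2 <= p u2 v1 - p u1 v1]).

Variable V : finType.

(* Elements of a graph on vertex type V: vertices (inl) and edges (inr). *)
Definition elt := (V + {set V})%type.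

(* A feature, restricted to (sub)graphs with vertices in V: it takes a graph
   given by its vertex set and edge set, and a subset X of its elements. *)
Definition feature := {set V} -> {set {set V}} -> {set elt} -> bool.

Definition simple_graph (E : {set {set V}}) : Prop :=
  forall e, e \in E -> #|e| = 2%N.

Variables (E : {set {set V}}) (f : {set V} -> R).

Definition sub_edges (w : option R) : {set {set V}} :=
  match w with
  | None => E
  | Some r => [set e in E | f e <= r]
  end.

Definition sub_verts (w : option R) : {set V} :=
  match w with
  | None => [set: V]
  | Some r => \bigcup_(e in sub_edges (Some r)) e
  end.

Definition elements (Vs : {set V}) (Es : {set {set V}}) : {set elt} :=
  [set inl x | x in Vs] :|: [set inr e | e in Es].

Definition Fset_at (F : feature) (w : option R) (X : {set elt}) : Prop :=
  X \subset elements (sub_verts w) (sub_edges w) /\ F (sub_verts w) (sub_edges w) X.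

Definition steady (F : feature) (u : R) (v : option R) (X : {set elt}) : Prop :=
  forall w : option R, ext_le (Some u) w -> ext_le w v -> Fset_at F w X.

Definition ranging (F : feature) (u : R) (v : option R) (X : {set elt}) : Prop :=
  (exists w : R, w <= u /\ Fset_at F (Some w) X) /\
  (exists w' : option R, ext_le v w' /\ Fset_at F w' X).

Definition sigmaF (F : feature) (u : R) (v : option R) : int :=
  (#|[set X : {set elt} | `[< steady F u v X >]]|)%:Z.

Definition rhoF (F : feature) (u : R) (v : option R) : int :=
  (#|[set X : {set elt} | `[< ranging F u v X >]]|)%:Z.

End Defs.

(* A set that is steady at (u2, v2) and steady at (u1, v1) with u1 <= u2 <= v1
   is steady on the union [u1, v2] of the two level intervals, and a set ranging
   at (u1, v1) and at (u2, v2) has a level below u1 and one above v2, hence ranges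
   at (u1, v2).  Both families also grow as the interval [u, v] shrinks.  For any
   family S(u, v) of finite sets with these three properties, the counting
   function |S(u, v)| is a categorical persistence function: monotonicity gives
   condition (1), and condition (2) follows from the inclusion
   S(u2, v2) \ S(u1, v2) ⊆ S(u2, v1) \ S(u1, v1). *)
From HB Require Import structures.
From mathcomp Require Import all_boot all_order all_algebra.
From mathcomp Require Import boolp reals.
Set Implicit Arguments. Unset Strict Implicit. Unset Printing Implicit Defensive.
Import Order.TTheory GRing.Theory Num.Theory.
Local Open Scope ring_scope.

Lemma ext_le_trans (R : realType) (a b c : option R) :
  ext_le a b -> ext_le b c -> ext_le a c.
Proof. by case: a => [a|]; case: b => [b|]; case: c => [c|] //=; apply: le_trans. Qed.

Lemma card_diff_le (T : finType) (A1 A2 B1 B2 : {set T}) :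
  A1 \subset A2 -> B1 \subset B2 -> B2 :\: B1 \subset A2 :\: A1 ->
  #|B2|%:Z - #|B1|%:Z <= #|A2|%:Z - #|A1|%:Z.
Proof.
have card_gap (C D : {set T}) : C \subset D -> #|D|%:Z - #|C|%:Z = #|D :\: C|%:Z.
  move=> CD; rewrite cardsD (setIidPr CD) subzn //.
  exact: subset_leq_card.
by move=> A12 B12 BA; rewrite !card_gap // lez_nat subset_leq_card.
Qed.

Lemma categorical_persistence_card (R : realType) (T : finType)
    (S : R -> option R -> {set T}) :
  (forall u1 u2 v, u1 <= u2 -> S u1 v \subset S u2 v) ->
  (forall u v1 v2, ext_le v1 v2 -> S u v2 \subset S u v1) ->
  (forall u1 u2 v1 v2, u1 <= u2 -> in_Delta u2 v1 -> ext_le v1 v2 ->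
     S u1 v1 :&: S u2 v2 \subset S u1 v2) ->
  categorical_persistence (fun u v => #|S u v|%:Z).
Proof.
move=> S_u S_v S_glue; split=> [|u1 u2 v1 v2 u12 Delta2 v12].
  by exists 0.
have new_sets : S u2 v2 :\: S u1 v2 \subset S u2 v1 :\: S u1 v1.
  apply/subsetP => X /setDP[X22 X12]; apply/setDP; split.
    exact: subsetP (S_v _ _ _ v12) X X22.
  apply: contra X12 => X11.
  by apply: (subsetP (S_glue _ _ _ _ u12 Delta2 v12)); rewrite inE X11.
split; rewrite ?lez_nat.
- exact/subset_leq_card/S_u.
- exact/subset_leq_card/S_v.
- by apply: card_diff_le new_sets; apply: S_u.
Qed.

Section SteadyRanging.
Variables (R : realType) (V : finType) (F : feature V)
  (E : {set {set V}}) (f : {set V} -> R).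

Implicit Types (u : R) (v : option R) (X : {set elt V}).

Local Notation steady := (steady E f F).
Local Notation ranging := (ranging E f F).

Lemma steadyWl u1 u2 v X : u1 <= u2 -> steady u1 v X -> steady u2 v X.
Proof.
move=> u12 X1 w u2w wv; apply: X1 wv.
exact: (@ext_le_trans _ (Some u1) (Some u2)).
Qed.

Lemma steadyWr u v1 v2 X : ext_le v1 v2 -> steady u v2 X -> steady u v1 X.
Proof. by move=> v12 X2 w uw wv; apply: X2 uw (ext_le_trans wv v12). Qed.

Lemma steady_glue u1 u2 v1 v2 X : ext_le (Some u2) v1 ->
  steady u1 v1 X -> steady u2 v2 X -> steady u1 v2 X.
Proof.
move=> u2v1 X1 X2 [r|] u1r rv2; last exact: X2.
have [u2r|/ltW ru2] := leP u2 r; first exact: X2.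
by apply: X1 => //; apply: (@ext_le_trans _ (Some r) (Some u2)).
Qed.

Lemma rangingWl u1 u2 v X : u1 <= u2 -> ranging u1 v X -> ranging u2 v X.
Proof.
move=> u12 [[w [wu1 Xw]] above]; split=> //.
by exists w; split=> //; apply: le_trans u12.
Qed.

Lemma rangingWr u v1 v2 X : ext_le v1 v2 -> ranging u v2 X -> ranging u v1 X.
Proof.
move=> v12 [below [w [v2w Xw]]]; split=> //.
by exists w; split=> //; apply: ext_le_trans v2w.
Qed.

Lemma ranging_glue u1 u2 v1 v2 X :
  ranging u1 v1 X -> ranging u2 v2 X -> ranging u1 v2 X.
Proof. by move=> [below _] [_ above]. Qed.

End SteadyRanging.

Theorem proposition2 (R : realType) (V : finType) (F : feature V)
  (E : {set {set V}}) (f : {set V} -> R) :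
  simple_graph E ->
  categorical_persistence (sigmaF E f F) /\ categorical_persistence (rhoF E f F).
Proof.
move=> _; split.
- apply: (categorical_persistence_card
    (S := fun u v => [set X | `[< steady E f F u v X >]])).
  + move=> u1 u2 v u12; apply/subsetP => X; rewrite !inE => /asboolP X1.
    by apply/asboolP; apply: steadyWl X1.
  + move=> u v1 v2 v12; apply/subsetP => X; rewrite !inE => /asboolP X2.
    by apply/asboolP; apply: steadyWr X2.
  + move=> u1 u2 v1 v2 _ /andP[u2v1 _] _; apply/subsetP => X.
    rewrite !inE => /andP[/asboolP X1 /asboolP X2].
    by apply/asboolP; apply: steady_glue X1 X2.
- apply: (categorical_persistence_card
    (S := fun u v => [set X | `[< ranging E f F u v X >]])).
  + move=> u1 u2 v u12; apply/subsetP => X; rewrite !inE => /asboolP X1.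
    by apply/asboolP; apply: rangingWl X1.
  + move=> u v1 v2 v12; apply/subsetP => X; rewrite !inE => /asboolP X2.
    by apply/asboolP; apply: rangingWr X2.
  + move=> u1 u2 v1 v2 _ _ _; apply/subsetP => X.
    rewrite !inE => /andP[/asboolP X1 /asboolP X2].
    by apply/asboolP; apply: ranging_glue X1 X2.
Qed.
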